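(* Let $N$ be a finite set with $|N|\ge2$. Under the correspondence between SE faces of $P_N$ and faces of $C_N$ (the SE face $\{\eta\in P_N:\langle o,\eta\rangle=u\}$ with $o$ an SE objective and $\langle o,\eta\rangle\le u$ valid on $P_N$ corresponds to the face $\{c\in C_N:\langle\tau_o,c\rangle=u\}$), the SE facets of $P_N$ correspond exactly to those facets of $C_N$ that contain the 1-imset (the all-ones vector in $\mathbb{R}^{\mathcal{S}}$). None of these facets of $C_N$ contains the 0-imset (the zero vector in $\mathbb{R}^{\mathcal{S}}$).
   Context: $\mathrm{DAG}(N)$ is the set of acyclic directed graphs over $N$; $\mathrm{pa}_G(a)$ is the parent set of $a$ in $G$; $G\sim H$ (Markov equivalence) means same adjacencies and same immoralities. $\Upsilon=\{(a|B): a\in N,\ \emptyset\neq B\subseteq N\setminus\{a\}\}$; $\eta_G\in\mathbb{R}^{\Upsilon}$ has $\eta_G(a|B)=1$ if $B=\mathrm{pa}_G(a)$, else $0$; $P_N=\mathrm{conv}\{\eta_G:G\in\mathrm{DAG}(N)\}$. $\mathcal{S}=\{S\subseteq N:|S|\ge2\}$; $c_\eta(S)=\sum_{a\in S}\sum_{B:\,S\setminus\{a\}\subseteq B\subseteq N\setminus\{a\}}\eta(a|B)$; $c_G=c_{\eta_G}$; $C_N=\mathrm{conv}\{c_G:G\in\mathrm{DAG}(N)\}$. (The 1-imset is $c_H$ for any full graph $H$, the 0-imset is $c_G$ for the empty graph.) $o$ is an SE objective if $\langle o,\eta_G\rangle=\langle o,\eta_H\rangle$ whenever $G\sim H$; an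 SE face/facet of $P_N$ is a face/facet of the form $\{v\in P_N:\langle o,v\rangle=u\}$ with $o$ SE and $\langle o,v\rangle\le u$ valid on $P_N$. For SE $o$, $\tau_o(T)=\sum_{\emptyset\neq K\subseteq T\setminus\{b\}}(-1)^{|T\setminus\{b\}|-|K|}o(b|K)$ for any $b\in T$ (independent of $b$), with $o(b|\emptyset)=0$; then $\langle o,\eta\rangle=\langle\tau_o,c_\eta\rangle$ for all $\eta$. *)

From HB Require Import structures.
From mathcomp Require Import all_boot all_order all_algebra.
Set Implicit Arguments. Unset Strict Implicit. Unset Printing Implicit Defensive.
Import Order.TTheory GRing.Theory Num.Theory.
Local Open Scope ring_scope.

Section Defs.
Variable R : realFieldType.
Variable N : finType.

Definition Ups := {p : N * {set N} | (p.1 \notin p.2) && (p.2 != set0)}.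
HB.instance Definition _ := Finite.on Ups.
Definition Sset := {S : {set N} | (1 < #|S|)%N}.
HB.instance Definition _ := Finite.on Sset.

(* Evaluate a vector on Upsilon at (a|B); value 0 outside Upsilon
   (in particular o(b|emptyset) = 0). *)
Definition ev (o : Ups -> R) (a : N) (B : {set N}) : R :=
  if @insub _ (fun p : N * {set N} => (p.1 \notin p.2) && (p.2 != set0)) Ups (a, B)
  is Some x then o x else 0.

(* A directed graph over N is given by its parent-set function pa. *)
Definition dgraph := {ffun N -> {set N}}.
Definition edge (G : dgraph) : rel N := fun x y => x \in G y.
Definition is_dag (G : dgraph) : bool :=
  [forall x, forall y, edge G x y ==> ~~ connect (edge G) y x].

Definition adj (G : dgraph) (a b : N) : bool := (a \in G b) || (b \in G a).
Definition immor (G : dgraph) (a c b : N) : bool :=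
  [&& a \in G c, b \in G c, a != b & ~~ adj G a b].
Definition markov_equiv (G H : dgraph) : Prop :=
  (forall a b, adj G a b = adj H a b) /\
  (forall a c b, immor G a c b = immor H a c b).

Definition eta (G : dgraph) : Ups -> R :=
  fun i => ((G (val i).1 == (val i).2) : nat)%:R.

Definition dot (I : finType) (o v : I -> R) : R := \sum_i o i * v i.

Definition conv_fam (I J : finType) (P : pred J) (f : J -> I -> R) : (I -> R) -> Prop :=
  fun x => exists lam : J -> R,
    [/\ forall j, 0 <= lam j, forall j, ~~ P j -> lam j = 0,
        \sum_j lam j = 1 & forall i, x i = \sum_j lam j * f j i].

Definition PN : (Ups -> R) -> Prop := conv_fam is_dag eta.

Definition cvec (e : Ups -> R) : Sset -> R :=
  fun S => \sum_(a in val S)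
             \sum_(B : {set N} | (val S :\ a \subset B) && (a \notin B)) ev e a B.

Definition CN : (Sset -> R) -> Prop := conv_fam is_dag (fun G => cvec (eta G)).

Definition SE (o : Ups -> R) : Prop :=
  forall G H, is_dag G -> is_dag H -> markov_equiv G H -> dot o (eta G) = dot o (eta H).

(* tau_o(T), computed with a chosen b in T (T is nonempty since |T| >= 2). *)
Definition tau (o : Ups -> R) : Sset -> R :=
  fun T => if [pick b in val T] is Some b then
     \sum_(K : {set N} | (K \subset val T :\ b) && (K != set0))
        (-1) ^+ (#|val T :\ b| - #|K|)%N * ev o b K
   else 0.

Definition one_imset : Sset -> R := fun _ => 1.
Definition zero_imset : Sset -> R := fun _ => 0.
End Defs.

Section Poly.
Variable R : realFieldType.
Variable I : finType.

Definition valid (P : (I -> R) -> Prop) (o : I -> R) (u : R) : Prop :=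
  forall v, P v -> dot o v <= u.

Definition face_of (P : (I -> R) -> Prop) (o : I -> R) (u : R) : (I -> R) -> Prop :=
  fun v => P v /\ dot o v = u.

Definition is_face (P F : (I -> R) -> Prop) : Prop :=
  exists o u, valid P o u /\ forall v, F v <-> face_of P o u v.

Definition aff_indep (k : nat) (x : 'I_k.+1 -> I -> R) : Prop :=
  forall lam : 'I_k.+1 -> R, \sum_j lam j = 0 ->
    (forall i, \sum_j lam j * x j i = 0) -> forall j, lam j = 0.

Definition dim_ge (X : (I -> R) -> Prop) (k : nat) : Prop :=
  exists x : 'I_k.+1 -> I -> R, (forall j, X (x j)) /\ aff_indep x.

(* A facet: a face F with dim F = dim P - 1. *)
Definition is_facet (P F : (I -> R) -> Prop) : Prop :=
  is_face P F /\ forall k, dim_ge F k <-> dim_ge P k.+1.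
End Poly.

Arguments PN R N : clear implicits.
Arguments CN R N : clear implicits.
Arguments one_imset R N : clear implicits.
Arguments zero_imset R N : clear implicits.

From Pilot Require Import Defs.
From HB Require Import structures.
From mathcomp Require Import all_boot all_order all_algebra zify lra.
Set Implicit Arguments. Unset Strict Implicit. Unset Printing Implicit Defensive.
Import Order.TTheory GRing.Theory Num.Theory.
Local Open Scope ring_scope.

(* An SE objective o satisfies the swap identity
     o(b|a C) - o(b|C) = o(a|b C) - o(a|C),
   read off from two complete DAGs differing only in the edge between a and b;
   conversely every objective constant on complete DAGs satisfies it. By
   Moebius inversion the objectives satisfying it are exactly the pullbacks
     o(a|B) = sum_(S : a in S, S :\ a \subset B) tau_o(S)
   along eta |-> c_eta, so that <o, eta> = <tau_o, c_eta>. Both polytopes are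
   full-dimensional, so a face is a facet iff the equations holding on it are
   the multiples of its own. For an SE facet of P_N, o is monotone in the
   parent sets, so the facet contains a complete DAG and the face of C_N
   contains the 1-imset; equations of that face pull back to equations of the
   facet. Conversely, if the face of C_N contains the 1-imset, all complete
   DAGs lie in the face of P_N, so every equation of that face satisfies the
   swap identity and is a pullback. *)

Lemma row_free_rowsub (F : fieldType) m m' p (g : 'I_m' -> 'I_m) (A : 'M[F]_(m, p)) :
  injective g -> row_free A -> row_free (rowsub g A).
Proof.
move=> g_inj freeA; apply: inj_row_free => v.
rewrite rowsubE mulmxA => /eqP; rewrite mulmx_free_eq0 // => /eqP /rowP vg0.
apply/rowP => j; have := vg0 (g j); rewrite !mxE => <-.
rewrite (bigD1 j) //= !mxE eqxx mulr1 big1 ?addr0 // => j' /negbTE nj.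
by rewrite !mxE (inj_eq g_inj) nj mulr0.
Qed.

Section AffineDimension.
Variables (R : realFieldType) (I : finType).
Local Notation n := #|{: option I}|.

(* Affine independence of points x_j is row-freeness of the rows (x_j, 1);
   the hyperplane [dot o x = u] is the row (o, -u), orthogonal to the rows of
   the points lying on it. *)
Definition homog (x : I -> R) (t : option I) : R := if t is Some i then x i else 1.

Definition homog_mx k (x : 'I_k -> I -> R) : 'M[R]_(k, n) :=
  \matrix_(j, l) homog (x j) (enum_val l).

Definition hyperplane_row (o : I -> R) (u : R) : 'rV[R]_n :=
  \row_l (if enum_val l is Some i then o i else - u).

Lemma sum_option (F : option I -> R) :
  \sum_(t : option I) F t = F None + \sum_i F (Some i).
Proof.
rewrite (bigD1 None) //=; congr (_ + _).
rewrite (reindex_omap Some (fun t => t)); last by case.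
by apply: eq_bigl => i; rewrite eqxx.
Qed.

Lemma sum_enum_val (F : option I -> R) : \sum_(l < n) F (enum_val l) = \sum_t F t.
Proof. by rewrite -(big_enum_val (A := predT)). Qed.

Lemma homog_mxE k (x : 'I_k -> I -> R) j t : homog_mx x j (enum_rank t) = homog (x j) t.
Proof. by rewrite mxE enum_rankK. Qed.

Lemma hyperplane_rowE o u t :
  hyperplane_row o u 0 (enum_rank t) = if t is Some i then o i else - u.
Proof. by rewrite mxE enum_rankK. Qed.

Lemma hyperplane_row0 o u : (forall i, o i = 0) -> u = 0 -> hyperplane_row o u = 0.
Proof.
by move=> o0 ->; apply/rowP => l; rewrite !mxE; case: (enum_val l) => [i|] /=; rewrite ?o0 ?oppr0.
Qed.

Lemma row_hyperplane (v : 'rV[R]_n) :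
  v = hyperplane_row (fun i => v 0 (enum_rank (Some i))) (- v 0 (enum_rank None)).
Proof.
apply/rowP => l; rewrite mxE.
by case E: (enum_val l) => [i|] /=; rewrite ?opprK -E enum_valK.
Qed.

Lemma homog_mx_hyperplane k (x : 'I_k -> I -> R) o u j :
  (homog_mx x *m (hyperplane_row o u)^T) j 0 = dot o (x j) - u.
Proof.
transitivity (\sum_t homog (x j) t * if t is Some i then o i else - u).
  by rewrite mxE -sum_enum_val; apply: eq_bigr => l _; rewrite !mxE.
rewrite sum_option /= mul1r addrC; congr (_ - _).
by apply: eq_bigr => i _; rewrite mulrC.
Qed.

Lemma hyperplane_row_kermx k (x : 'I_k -> I -> R) o u :
  (forall j, dot o (x j) = u) -> (hyperplane_row o u <= kermx (homog_mx x)^T)%MS.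
Proof.
move=> xo; apply/sub_kermxP; rewrite -[hyperplane_row o u]trmxK -trmx_mul.
have -> : homog_mx x *m (hyperplane_row o u)^T = 0.
  by apply/colP => j; rewrite homog_mx_hyperplane xo subrr mxE.
by rewrite trmx0.
Qed.

Lemma aff_indepP k (x : 'I_k.+1 -> I -> R) : aff_indep x <-> row_free (homog_mx x).
Proof.
split=> [indep | free].
  apply: inj_row_free => v vx0.
  have col t : \sum_j v 0 j * homog (x j) t = 0.
    move/rowP: vx0 => /(_ (enum_rank t)); rewrite !mxE => vx0t; rewrite -[RHS]vx0t.
    by apply: eq_bigr => j _; rewrite homog_mxE.
  apply/rowP => j; rewrite mxE.
  apply: (indep (fun j => v 0 j)) => [|i]; last by rewrite -[RHS](col (Some i)).
  by rewrite -[RHS](col None); apply: eq_bigr => l _; rewrite mulr1.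
move=> lam lam_sum0 lam_x0 j.
have : \row_j lam j *m homog_mx x = 0.
  apply/rowP => l; rewrite !mxE; case E: (enum_val l) => [i|].
    by rewrite -[RHS](lam_x0 i); apply: eq_bigr => j' _; rewrite !mxE E.
  by rewrite -[RHS]lam_sum0; apply: eq_bigr => j' _; rewrite !mxE E mulr1.
move/eqP; rewrite mulmx_free_eq0 // => /eqP /rowP /(_ j).
by rewrite !mxE.
Qed.

Lemma dim_ge_leq (X : (I -> R) -> Prop) k j : dim_ge X k -> (j <= k)%N -> dim_ge X j.
Proof.
move=> [x [Xx indep]] jk; have jk1 : (j.+1 <= k.+1)%N by [].
exists (fun i => x (widen_ord jk1 i)); split => [i|]; first exact: Xx.
apply/aff_indepP.
have -> : homog_mx (fun i => x (widen_ord jk1 i)) = rowsub (widen_ord jk1) (homog_mx x).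
  by apply/matrixP => a b; rewrite !mxE.
apply: row_free_rowsub; last exact/aff_indepP.
by move=> a b /(congr1 val) /= /val_inj.
Qed.

Lemma dim_ge_subset (X Y : (I -> R) -> Prop) k :
  (forall x, X x -> Y x) -> dim_ge X k -> dim_ge Y k.
Proof. by move=> XY [x [Xx indep]]; exists x; split => // j; apply: XY. Qed.

Lemma dim_ge_card (X : (I -> R) -> Prop) k : dim_ge X k -> (k <= #|I|)%N.
Proof.
move=> [x [_ /aff_indepP free]].
by have := rank_leq_col (homog_mx x); rewrite (eqP free) card_option.
Qed.

Lemma dim_ge_full_annihilator (X : (I -> R) -> Prop) o u :
  dim_ge X #|I| -> (forall x, X x -> dot o x = u) -> forall i, o i = 0.
Proof.
move=> [x [Xx /aff_indepP free]] Xo i.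
have ker0 : kermx (homog_mx x)^T = 0.
  apply/eqP; rewrite -mxrank_eq0 mxrank_ker mxrank_tr (eqP free).
  by rewrite card_option subnn.
have := hyperplane_row_kermx (fun j => Xo _ (Xx j)).
rewrite ker0 submx0 => /eqP /rowP /(_ (enum_rank (Some i))).
by rewrite hyperplane_rowE mxE.
Qed.

Lemma dim_ge_codim1_annihilator (X : (I -> R) -> Prop) k o0 u0 o u i0 :
  dim_ge X k -> k.+1 = #|I| -> o0 i0 != 0 ->
  (forall x, X x -> dot o0 x = u0) -> (forall x, X x -> dot o x = u) ->
  exists a, (forall i, o i = a * o0 i) /\ u = a * u0.
Proof.
move=> [x [Xx /aff_indepP free]] hk o0_i0 Xo0 Xo.
have K0 := hyperplane_row_kermx (fun j => Xo0 _ (Xx j)).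
have K := hyperplane_row_kermx (fun j => Xo _ (Xx j)).
have rk1 : \rank (kermx (homog_mx x)^T) = 1%N.
  by rewrite mxrank_ker mxrank_tr (eqP free) card_option hk subSnn.
have h0_neq0 : hyperplane_row o0 u0 != 0.
  apply/eqP => /rowP /(_ (enum_rank (Some i0))); rewrite hyperplane_rowE mxE.
  by move/eqP; rewrite (negbTE o0_i0).
have ker_sub : (kermx (homog_mx x)^T <= hyperplane_row o0 u0)%MS.
  have := mxrank_leqif_sup K0; rewrite rk1 rank_rV h0_neq0 /= => -[_ <-].
  exact: eqxx.
have /sub_rVP [a ha] := submx_trans K ker_sub.
exists a; split => [i|].
  by have := hyperplane_rowE o u (Some i); rewrite ha !mxE enum_rankK.
have := hyperplane_rowE o u None; rewrite ha !mxE enum_rankK /= => h.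
by rewrite -[u]opprK -h mulrN opprK.
Qed.

(* The left kernel of the matrix of the homogenised points Y j lies in z, so
   that matrix has rank > k and k+1 of its rows are linearly independent. *)
Lemma dim_ge_of_annihilators (J : finType) (P : pred J) (Y : J -> I -> R)
    (X : (I -> R) -> Prop) (z : 'rV[R]_n) k :
  (forall j, P j -> X (Y j)) ->
  (forall o u, (forall j, P j -> dot o (Y j) = u) -> (hyperplane_row o u <= z)%MS) ->
  (k.+1 + \rank z <= n)%N -> dim_ge X k.
Proof.
move=> XY Yz hk.
pose MY : 'M[R]_(#|J|, n) := \matrix_(j, l)
  if P (enum_val j) then homog (Y (enum_val j)) (enum_val l) else 0.
have Kz : (kermx MY^T <= z)%MS.
  apply/row_subP => r; set v := row r _.
  have vMY : v *m MY^T = 0 by apply/sub_kermxP; apply: row_sub.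
  rewrite [v]row_hyperplane; apply: Yz => j Pj.
  have vY : \sum_t homog (Y j) t * v 0 (enum_rank t) = 0.
    move/rowP: vMY => /(_ (enum_rank j)); rewrite !mxE => vMYj.
    rewrite -[RHS]vMYj -sum_enum_val; apply: eq_bigr => l _.
    by rewrite !mxE enum_rankK Pj enum_valK mulrC.
  move: vY; rewrite sum_option /= mul1r => vY.
  apply: (addrI (v 0 (enum_rank None))); rewrite subrr -[RHS]vY.
  by congr (_ + _); apply: eq_bigr => i _; rewrite mulrC.
have rkMY : (k.+1 <= \rank MY)%N.
  by have := mxrankS Kz; rewrite mxrank_ker mxrank_tr; lia.
pose g (j : 'I_k.+1) := maxrankfun MY (widen_ord rkMY j).
have free_g : row_free (rowsub g MY).
  have -> : rowsub g MY = rowsub (widen_ord rkMY) (rowsub (maxrankfun MY) MY).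
    by apply/matrixP => a b; rewrite !mxE.
  apply: row_free_rowsub; last exact: maxrowsub_free.
  by move=> a b /(congr1 val) /= /val_inj.
have Pg j : P (enum_val (g j)).
  apply/negPn/negP => nP.
  have : row j (rowsub g MY) = 0 by apply/rowP => l; rewrite !mxE (negbTE nP).
  rewrite rowE => /eqP; rewrite mulmx_free_eq0 // => /eqP /matrixP /(_ 0 j).
  by rewrite !mxE !eqxx => /eqP; rewrite oner_eq0.
exists (fun j => Y (enum_val (g j))); split => [j|]; first exact/XY/Pg.
apply/aff_indepP.
have -> : homog_mx (fun j => Y (enum_val (g j))) = rowsub g MY.
  by apply/matrixP => a b; rewrite !mxE Pg.
exact: free_g.
Qed.
End AffineDimension.

Section Faces.
Variable R : realFieldType.

Lemma dot_conv_comb (I J : finType) (o : I -> R) (lam : J -> R) (f : J -> I -> R) x :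
  (forall i, x i = \sum_j lam j * f j i) -> dot o x = \sum_j lam j * dot o (f j).
Proof.
move=> xE; rewrite /dot; under eq_bigr do rewrite xE mulr_sumr.
rewrite exchange_big; apply: eq_bigr => j _; rewrite mulr_sumr.
by apply: eq_bigr => i _; rewrite mulrCA.
Qed.

Lemma conv_fam_vertex (I J : finType) (P : pred J) (f : J -> I -> R) j :
  P j -> conv_fam P f (f j).
Proof.
move=> Pj; exists (fun k => ((k == j) : nat)%:R); split.
- by move=> k; case: (k == j).
- by move=> k nPk; case: eqP => // kj; move: nPk; rewrite kj Pj.
- by rewrite (bigD1 j) //= eqxx big1 ?addr0 // => k /negbTE ->.
- move=> i; rewrite (bigD1 j) //= eqxx mul1r big1 ?addr0 // => k /negbTE ->.
  by rewrite mul0r.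
Qed.

Lemma conv_fam_map (I I' J : finType) (P : pred J) (f : J -> I -> R) (g : J -> I' -> R)
    (L : (I -> R) -> I' -> R) x :
  (forall (lam : J -> R) y, (forall i, y i = \sum_j lam j * f j i) ->
     forall i', L y i' = \sum_j lam j * g j i') ->
  conv_fam P f x -> conv_fam P g (L x).
Proof. by move=> Llin [lam [lam_ge0 lamP lam1 xE]]; exists lam; split => //; exact: Llin. Qed.

(* A point of the face [dot o x = u] is a convex combination of vertices in
   that face only, so equations holding on these vertices hold on the face. *)
Lemma conv_face_eq (I J : finType) (P : pred J) (f : J -> I -> R) o u o' u' x :
  (forall j, P j -> dot o (f j) <= u) ->
  (forall j, P j -> dot o (f j) = u -> dot o' (f j) = u') ->
  conv_fam P f x -> dot o x = u -> dot o' x = u'.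
Proof.
move=> fo fo' [lam [lam_ge0 lamP lam1 xE]] xo.
have slack0 j : lam j * (u - dot o (f j)) = 0.
  have : \sum_j lam j * (u - dot o (f j)) = 0.
    under eq_bigr do rewrite mulrBr.
    by rewrite sumrB -mulr_suml lam1 mul1r -(dot_conv_comb o xE) xo subrr.
  move/psumr_eq0P; apply => // k _.
  case: (boolP (P k)) => Pk; last by rewrite lamP // mul0r.
  by apply: mulr_ge0 => //; rewrite subr_ge0; apply: fo.
rewrite (dot_conv_comb o' xE) -[u']mul1r -lam1 mulr_suml; apply: eq_bigr => j _.
have [->|lam_neq0] := eqVneq (lam j) 0; first by rewrite !mul0r.
have Pj : P j by apply: contraT => nPj; move: lam_neq0; rewrite lamP ?eqxx.
move/eqP: (slack0 j); rewrite mulf_eq0 (negbTE lam_neq0) /= subr_eq0 => /eqP fj.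
by rewrite fo'.
Qed.

Variable I : finType.

Lemma dot_delta (x : I -> R) j : dot (fun i => ((i == j) : nat)%:R) x = x j.
Proof.
by rewrite /dot (bigD1 j) //= eqxx mul1r big1 ?addr0 // => i /negbTE ->; rewrite mul0r.
Qed.

Lemma is_facetP (Pol F : (I -> R) -> Prop) :
  (0 < #|I|)%N -> dim_ge Pol #|I| ->
  is_facet Pol F <-> [/\ is_face Pol F, dim_ge F #|I|.-1 & ~ dim_ge F #|I|].
Proof.
move=> I0 full.
have dimP m : dim_ge Pol m <-> (m <= #|I|)%N.
  by split=> [|m_le]; [exact: dim_ge_card | exact: dim_ge_leq full m_le].
split.
  case=> faceF dimF; split => //; first by apply/dimF; rewrite prednK //; apply/dimP.
  by move/dimF/dimP; rewrite ltnn.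
case=> faceF dimF nfull; split => // k; split.
  move=> dimFk; apply/dimP; case: (ltnP k #|I|) => // hk.
  by case: nfull; apply: dim_ge_leq dimFk hk.
by move/dimP => hk; apply: dim_ge_leq dimF _; rewrite -ltnS prednK.
Qed.

Lemma facet_normal_neq0 (Pol : (I -> R) -> Prop) o u :
  (0 < #|I|)%N -> dim_ge Pol #|I| -> is_facet Pol (face_of Pol o u) ->
  exists i, o i != 0.
Proof.
move=> I0 full /(is_facetP _ I0 full) [_ [x [Fx _]] nfull].
case: (boolP [exists i, o i != 0]) => [/existsP //|/existsPn o0].
case: nfull; apply: dim_ge_subset full => y Poly; split => //.
have [_ <-] := Fx ord0; apply: eq_bigr => i _.
by rewrite (eqP (negPn (o0 i))) !mul0r.
Qed.

Lemma facet_annihilator (Pol : (I -> R) -> Prop) o u o' u' :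
  (0 < #|I|)%N -> dim_ge Pol #|I| -> is_facet Pol (face_of Pol o u) ->
  (forall x, face_of Pol o u x -> dot o' x = u') ->
  exists a, (forall i, o' i = a * o i) /\ u' = a * u.
Proof.
move=> I0 full facetF Fo'; have [i0 o_i0] := facet_normal_neq0 I0 full facetF.
have [_ dimF _] := (is_facetP _ I0 full).1 facetF.
apply: (dim_ge_codim1_annihilator dimF _ o_i0) => //; first by rewrite prednK.
by move=> x [].
Qed.

Lemma is_facet_face (J : finType) (P : pred J) (Y : J -> I -> R)
    (Pol : (I -> R) -> Prop) o u :
  (0 < #|I|)%N -> dim_ge Pol #|I| -> valid Pol o u -> (exists i, o i != 0) ->
  (forall j, P j -> face_of Pol o u (Y j)) ->
  (forall o' u', (forall j, P j -> dot o' (Y j) = u') ->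
     exists a, (forall i, o' i = a * o i) /\ u' = a * u) ->
  is_facet Pol (face_of Pol o u).
Proof.
move=> I0 full valid_ou [i0 o_i0] YF Yprop; apply/(is_facetP _ I0 full); split.
- by exists o, u.
- apply: (dim_ge_of_annihilators (z := hyperplane_row o u) YF).
    move=> o' u' /Yprop [a [o'E u'E]].
    have -> : hyperplane_row o' u' = a *: hyperplane_row o u.
      apply/rowP => l; rewrite !mxE.
      by case: (enum_val l) => [i|] /=; rewrite ?o'E ?u'E ?mulrN.
    exact: scalemx_sub.
  rewrite prednK //; apply: (@leq_trans (#|I| + 1)).
    by rewrite leq_add2l rank_leq_row.
  by rewrite addn1 card_option.
- move=> /dim_ge_full_annihilator o0; move: o_i0.
  by rewrite (o0 o u) ?eqxx // => x [].
Qed.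

End Faces.

Section Imsets.
Variables (R : realFieldType) (N : finType).
Local Notation Ups := (Ups N).
Local Notation Sset := (Sset N).
Local Notation dgraph := (dgraph N).
Local Notation eta := (@Defs.eta R N).

Lemma evE (o : Ups -> R) (a : N) (B : {set N}) :
  ev o a B = \sum_(i : Ups) o i * ((val i == (a, B)) : nat)%:R.
Proof.
rewrite /ev; case: insubP => [i0 _ vi0 | nUps].
  rewrite (bigD1 i0) //= vi0 eqxx mulr1 big1 ?addr0 // => i ni.
  by rewrite -vi0 (inj_eq val_inj) (negbTE ni) mulr0.
rewrite big1 // => i _; case: eqP => [iE|]; last by rewrite mulr0.
by move: (valP i); rewrite iE => h; move: nUps; rewrite h.
Qed.

Lemma ev_val (o : Ups -> R) i : ev o (val i).1 (val i).2 = o i.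
Proof. by rewrite /ev -surjective_pairing valK. Qed.

Lemma ev_outside (o : Ups -> R) (a : N) (B : {set N}) :
  ~~ ((a \notin B) && (B != set0)) -> ev o a B = 0.
Proof. by move=> h; rewrite /ev insubN. Qed.

Lemma ev_set0 (o : Ups -> R) (a : N) : ev o a set0 = 0.
Proof. by rewrite ev_outside // eqxx andbF. Qed.

Lemma ev_mem (o : Ups -> R) (a : N) (B : {set N}) : a \in B -> ev o a B = 0.
Proof. by move=> aB; rewrite ev_outside // aB. Qed.

Lemma eq_ev (o1 o2 : Ups -> R) (a : N) (B : {set N}) :
  o1 =1 o2 -> ev o1 a B = ev o2 a B.
Proof. by move=> o12; rewrite !evE; apply: eq_bigr => i _; rewrite o12. Qed.

Lemma evB (o1 o2 : Ups -> R) (a : N) (B : {set N}) :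
  ev (fun i => o1 i - o2 i) a B = ev o1 a B - ev o2 a B.
Proof. by rewrite !evE -sumrB; apply: eq_bigr => i _; rewrite mulrBl. Qed.

Lemma evM (o : Ups -> R) c (a : N) (B : {set N}) :
  ev (fun i => c * o i) a B = c * ev o a B.
Proof. by rewrite !evE mulr_sumr; apply: eq_bigr => i _; rewrite mulrA. Qed.

Lemma ev0 (a : N) (B : {set N}) : ev (fun _ : Ups => 0 : R) a B = 0.
Proof. by rewrite evE big1 // => i _; rewrite mul0r. Qed.

Lemma ev_delta (i : Ups) (a : N) (B : {set N}) :
  ev (fun j => ((j == i) : nat)%:R : R) a B = ((val i == (a, B)) : nat)%:R.
Proof.
by rewrite evE (bigD1 i) //= eqxx mul1r big1 ?addr0 // => j /negbTE ->; rewrite mul0r.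
Qed.

Lemma dot_eta (o : Ups -> R) (G : dgraph) : dot o (eta G) = \sum_x ev o x (G x).
Proof.
under [RHS]eq_bigr do rewrite evE.
rewrite exchange_big /dot; apply: eq_bigr => i _.
rewrite -mulr_sumr; congr (_ * _).
rewrite (bigD1 (val i).1) //= big1 ?addr0.
  by rewrite /Defs.eta /=; case: (sval i) => a B /=; rewrite xpair_eqE eqxx /= eq_sym.
by move=> x nx; case: eqP => // iE; move: nx; rewrite iE /= eqxx.
Qed.

(* The coordinate (a|B) contributes to the coordinate S of the c-imset. *)
Definition covers (S : {set N}) (i : Ups) : bool :=
  ((val i).1 \in S) && (S :\ (val i).1 \subset (val i).2).

Lemma cvecE (e : Ups -> R) S : cvec e S = dot (fun i => (covers (val S) i : nat)%:R) e.
Proof.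
rewrite /cvec /dot; under eq_bigr do under eq_bigr do rewrite evE.
under eq_bigr do rewrite exchange_big /=.
rewrite exchange_big /=; apply: eq_bigr => i _.
under eq_bigr do rewrite -mulr_sumr.
rewrite -mulr_sumr mulrC; congr (_ * _).
have /andP [ni _] := valP i.
rewrite /covers; case: (boolP ((val i).1 \in val S)) => iS /=.
  rewrite (bigD1 (val i).1) //= [X in _ + X]big1 ?addr0; last first.
    move=> a /andP [_ na]; rewrite big1 // => B _.
    by rewrite [val i]surjective_pairing xpair_eqE eq_sym (negbTE na).
  case: (boolP (val S :\ (val i).1 \subset (val i).2)) => Si.
    rewrite (bigD1 (val i).2) /=; last by rewrite Si.
    rewrite [val i]surjective_pairing xpair_eqE !eqxx big1 ?addr0 // => B /andP [_ nB].
    by rewrite xpair_eqE eqxx eq_sym (negbTE nB).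
  rewrite big1 // => B /andP [SB _].
  by case: (val i =P _) => [iE|] //; move: Si; rewrite iE /= SB.
rewrite big1 // => a aS; rewrite big1 // => B _.
by case: (val i =P _) => [iE|] //; move: iS; rewrite iE /= aS.
Qed.

(* The transpose of the linear map [cvec]. *)
Definition pullback_at (t : Sset -> R) (a : N) (B : {set N}) : R :=
  \sum_(S : Sset | (a \in val S) && (val S :\ a \subset B)) t S.
Definition pullback (t : Sset -> R) (i : Ups) : R := pullback_at t (val i).1 (val i).2.

Lemma dot_cvec (t : Sset -> R) (e : Ups -> R) : dot t (cvec e) = dot (pullback t) e.
Proof.
rewrite /dot; under eq_bigr do rewrite cvecE /dot mulr_sumr.
rewrite exchange_big; apply: eq_bigr => i _.
rewrite /pullback /pullback_at mulr_suml [RHS]big_mkcond; apply: eq_bigr => S _.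
by rewrite /covers; case: ifP => _; rewrite /= ?mul1r ?mul0r ?mulr0.
Qed.

Lemma pullbackM (t : Sset -> R) a i : pullback (fun S => a * t S) i = a * pullback t i.
Proof. by rewrite /pullback /pullback_at mulr_sumr. Qed.

Lemma pullbackB (t1 t2 : Sset -> R) i :
  pullback (fun S => t1 S - t2 S) i = pullback t1 i - pullback t2 i.
Proof. by rewrite /pullback /pullback_at sumrB. Qed.

Lemma card_Sset (S : Sset) : (1 < #|val S|)%N.
Proof. exact: valP S. Qed.

Lemma pullback_at_set0 (t : Sset -> R) (a : N) : pullback_at t a set0 = 0.
Proof.
rewrite /pullback_at big1 // => S /andP [aS]; rewrite subset0 => /eqP Sa.
by have := card_Sset S; rewrite (cardsD1 a) aS Sa cards0.
Qed.

Lemma ev_pullback (t : Sset -> R) (a : N) (B : {set N}) :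
  a \notin B -> ev (pullback t) a B = pullback_at t a B.
Proof.
move=> aB; have [->|nB] := eqVneq B set0; first by rewrite ev_set0 pullback_at_set0.
by rewrite /ev insubT /= ?aB ?nB.
Qed.

Lemma dag_irrefl (G : dgraph) x : is_dag G -> x \notin G x.
Proof.
move=> /forallP /(_ x) /forallP /(_ x) /implyP dagG; apply/negP => xx.
by have := dagG xx; rewrite connect0.
Qed.

Lemma dag_asym (G : dgraph) x y : is_dag G -> x \in G y -> y \in G x -> False.
Proof.
move=> /forallP /(_ x) /forallP /(_ y) /implyP dagG xy yx.
by have := dagG xy; rewrite connect1.
Qed.

Lemma dag_sub (G H : dgraph) : is_dag G -> (forall x, H x \subset G x) -> is_dag H.
Proof.
move=> dagG HG; apply/forallP => x; apply/forallP => y; apply/implyP => xy.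
have xyG : edge G x y by apply: (subsetP (HG y)).
move: dagG => /forallP /(_ x) /forallP /(_ y) /implyP /(_ xyG); apply: contra.
by apply: connect_sub => v w vw; apply: connect1; exact: (subsetP (HG w)).
Qed.

Definition is_sink (G : dgraph) (S : {set N}) (x : N) : bool :=
  (x \in S) && (S :\ x \subset G x).

Lemma sum_indicator_unique (T : finType) (P : pred T) :
  (forall x y, P x -> P y -> x = y) ->
  \sum_(x : T) ((P x : nat)%:R : R) = (([exists x, P x] : bool) : nat)%:R.
Proof.
move=> Puniq; case: existsP => [[x0 Px0]|nP].
  rewrite (bigD1 x0) //= Px0 big1 ?addr0 // => y ny.
  by case: (boolP (P y)) => // Py; move: ny; rewrite (Puniq _ _ Py Px0) eqxx.
by rewrite big1 // => x _; case: (boolP (P x)) => // Px; case: nP; exists x.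
Qed.

(* A DAG has at most one sink in S (two sinks would be each other's parents). *)
Lemma cvec_eta_dag (G : dgraph) (S : Sset) :
  is_dag G -> cvec (eta G) S = (([exists x, is_sink G (val S) x] : bool) : nat)%:R.
Proof.
move=> dagG; rewrite cvecE dot_eta -sum_indicator_unique; last first.
  move=> x y /andP [xS Sx] /andP [yS Sy]; apply/eqP; apply: contraT => nxy.
  exfalso; apply: (dag_asym (x := x) (y := y) dagG).
    by apply: (subsetP Sy); rewrite !inE xS nxy.
  by apply: (subsetP Sx); rewrite !inE yS eq_sym nxy.
apply: eq_bigr => x _.
have [Gx0|Gx_neq0] := eqVneq (G x) set0.
  rewrite Gx0 ev_set0 /is_sink Gx0 subset0; case: (boolP (x \in val S)) => // xS /=.
  case: (boolP (_ == set0)) => // /eqP Sx.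
  by have := card_Sset S; rewrite (cardsD1 x) xS Sx cards0.
by rewrite /ev insubT /= ?dag_irrefl.
Qed.

Lemma dag_has_sink (G : dgraph) (S : {set N}) x0 : is_dag G -> x0 \in S ->
  exists2 x, x \in S & forall y, y \in S -> x \notin G y.
Proof.
move=> dagG x0S; pose d x := #|[set z | connect (edge G) x z]|.
have [x xS xmin] := arg_minnP d x0S.
exists x => // y yS; apply/negP => xy.
have := xmin y yS; rewrite leqNgt => /negP; apply.
apply: proper_card; apply/properP; split.
  apply/subsetP => z; rewrite !inE => yz.
  by apply: connect_trans yz; apply: connect1.
exists x; first by rewrite inE connect0.
by rewrite inE; move: dagG => /forallP /(_ x) /forallP /(_ y) /implyP; exact.
Qed.

(* If a is a sink of S in G, every sink x of S in H has all of S as parents: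
   a missing parent y would be non-adjacent to x, and x -> a <- y would be an
   immorality of G absent from H. *)
Lemma markov_equiv_sink (G H : dgraph) (S : {set N}) :
  is_dag G -> is_dag H -> markov_equiv G H ->
  [exists x, is_sink G S x] -> [exists x, is_sink H S x].
Proof.
move=> dagG dagH [eadj eimm] /existsP [a /andP [aS Sa]].
have [x xS xsink] := dag_has_sink dagH aS.
apply/existsP; exists x; rewrite /is_sink xS /=; apply/subsetP => y.
rewrite !inE => /andP [nyx yS].
have adjH : adj H y x -> y \in H x.
  by rewrite /adj => /orP [//|xHy]; move: (xsink _ yS); rewrite xHy.
apply: adjH; rewrite -eadj.
have inGa z : z \in S -> z != a -> z \in G a.
  by move=> zS za; apply: (subsetP Sa); rewrite !inE za zS.
have [xa|nxa] := eqVneq x a; first by rewrite /adj xa inGa // -xa.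
case: (boolP (adj G y x)) => // nadj.
have ya : y != a.
  by apply/eqP => eya; move: nadj; rewrite eya /adj (inGa x) // orbT.
have : immor G x a y.
  rewrite /immor (inGa x xS nxa) (inGa y yS ya) /=; apply/andP; split.
    by apply/eqP => exy; move: nyx; rewrite exy eqxx.
  by move: nadj; rewrite /adj orbC.
by rewrite eimm /immor => /andP [xHa _]; move: (xsink _ aS); rewrite xHa.
Qed.

Lemma cvec_eta_markov (G H : dgraph) : is_dag G -> is_dag H -> markov_equiv G H ->
  cvec (eta G) =1 cvec (eta H).
Proof.
move=> dagG dagH GH S; rewrite !cvec_eta_dag //.
have HG : markov_equiv H G by case: GH => h1 h2; split => *; rewrite ?h1 ?h2.
case: (boolP [exists x, is_sink G (val S) x]) => sinkG;
  case: (boolP [exists x, is_sink H (val S) x]) => sinkH //.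
  by move: sinkH; rewrite (markov_equiv_sink dagG dagH GH sinkG).
by move: sinkG; rewrite (markov_equiv_sink dagH dagG HG sinkH).
Qed.

Lemma ev_monotone (o : Ups -> R) :
  (forall v (B : {set N}) w, v \notin B -> w \notin B -> w != v ->
     ev o v B <= ev o v (w |: B)) ->
  forall v (B B' : {set N}), v \notin B' -> B \subset B' -> ev o v B <= ev o v B'.
Proof.
move=> o_mono1 v B B'; move: {2}#|B' :\: B| (leqnn #|B' :\: B|) => m.
elim: m B' => [|m IH] B' hm vB' BB'.
  by have -> : B = B' by apply/eqP; rewrite eqEsubset BB' -setD_eq0 -cards_eq0 -leqn0.
have [/eqP|/set0Pn [w /setDP [wB' wB]]] := eqVneq (B' :\: B) set0.
  by rewrite setD_eq0 => B'B; have -> : B = B' by apply/eqP; rewrite eqEsubset BB'.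
have vB'w : v \notin B' :\ w by rewrite !inE negb_and vB' orbT.
apply: le_trans (IH (B' :\ w) _ vB'w _) _.
- move: hm; rewrite (cardsD1 w (B' :\: B)) !inE wB wB' /= add1n ltnS.
  by rewrite !setDDl setUC.
- apply/subsetP => y yB; rewrite !inE (subsetP BB') // andbT.
  by apply: contraNneq wB => <-.
- rewrite -{2}(setD1K wB'); apply: o_mono1 => //; first by rewrite !inE eqxx.
  by apply: contraNneq vB' => <-.
Qed.

End Imsets.

Section RankDags.
Variables (R : realFieldType) (N : finType).
Local Notation Ups := (Ups N).
Local Notation dgraph := (dgraph N).
Local Notation eta := (@Defs.eta R N).

Definition rank_dag (r : N -> nat) : dgraph := [ffun x => [set y | (r y < r x)%N]].

Lemma dag_of_ranking (G : dgraph) (r : N -> nat) :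
  (forall x y, x \in G y -> (r x < r y)%N) -> is_dag G.
Proof.
move=> Gr; have path_up p y : path (edge G) y p -> (r y <= r (last y p))%N.
  elim: p y => [|z p IH] y //= /andP [yz pz].
  by apply: leq_trans (IH _ pz); apply: ltnW; apply: Gr.
apply/forallP => x; apply/forallP => y; apply/implyP => xy.
apply/negP => /connectP [p /path_up yp xE].
by move: yp; rewrite -xE leqNgt Gr.
Qed.

Lemma rank_dag_is_dag r : is_dag (rank_dag r).
Proof. by apply: (dag_of_ranking (r := r)) => x y; rewrite ffunE inE. Qed.

Lemma adj_rank_dag r : injective r -> forall x y, adj (rank_dag r) x y = (x != y).
Proof.
move=> r_inj x y; rewrite /adj !ffunE !inE.
case: (ltngtP (r x) (r y)) => [rxy|rxy|rxy] /=; last by rewrite (r_inj _ _ rxy) eqxx.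
all: by apply/esym/eqP => xy; move: rxy; rewrite xy ltnn.
Qed.

Lemma rank_dag_markov r1 r2 : injective r1 -> injective r2 ->
  markov_equiv (rank_dag r1) (rank_dag r2).
Proof.
move=> r1_inj r2_inj; split => [a b|a c b]; first by rewrite !adj_rank_dag.
by rewrite /immor !adj_rank_dag // !negbK; case: (a == b); rewrite ?andbF.
Qed.

Lemma cvec_rank_dag r : injective r -> forall S, cvec (eta (rank_dag r)) S = 1.
Proof.
move=> r_inj S; rewrite cvec_eta_dag ?rank_dag_is_dag //.
have [x0 x0S] : exists x0, x0 \in val S.
  by apply/set0Pn; rewrite -card_gt0 ltnW // card_Sset.
have [x xS xmax] := arg_maxnP r x0S.
suff -> : [exists x, is_sink (rank_dag r) (val S) x] by [].
apply/existsP; exists x; apply/andP; split; first exact: xS.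
apply/subsetP => y.
rewrite !inE ffunE inE => /andP [nyx yS].
rewrite ltn_neqAle; apply/andP; split; last exact: xmax.
by apply: contra nyx => /eqP ryx; apply/eqP; exact: r_inj.
Qed.

Definition lex_rank (f : N -> nat) (x : N) : nat := (f x * #|N| + enum_rank x)%N.

Lemma lex_rank_lt f x y : (lex_rank f y < lex_rank f x)%N =
  (f y < f x)%N || ((f y == f x) && (enum_rank y < enum_rank x)%N).
Proof.
rewrite /lex_rank; have := ltn_ord (enum_rank x); have := ltn_ord (enum_rank y).
move: (val (enum_rank x)) (val (enum_rank y)) => c d.
move: (f x) (f y) #|N| => a b n dn cn.
by apply/idP/idP => [lt_yx|/orP [lt_ba|/andP [/eqP -> lt_dc]]]; nia.
Qed.

Lemma lex_rank_inj f : injective (lex_rank f).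
Proof.
move=> x y xy; apply/enum_rank_inj/val_inj.
have : (lex_rank f x %% #|N| = lex_rank f y %% #|N|)%N by rewrite xy.
by rewrite /lex_rank !modnMDl !modn_small ?ltn_ord.
Qed.

(* The ordering C < a < b < rest: a has parents C and b has parents a |: C. *)
Definition layers (C : {set N}) (a b x : N) : nat :=
  if x \in C then 0 else if x == a then 1 else if x == b then 2 else 3.

Lemma layers_dag_fst (C : {set N}) (a b : N) : a \notin C ->
  rank_dag (lex_rank (layers C a b)) a = C.
Proof.
move=> aC; apply/setP => y; rewrite ffunE inE lex_rank_lt /layers (negbTE aC) eqxx.
case: (boolP (y \in C)) => //= yC.
by case: (boolP (y == a)) => [/eqP ->|ya] /=; [rewrite ltnn | case: (y == b)].
Qed.

Lemma layers_dag_snd (C : {set N}) (a b : N) : a != b -> a \notin C -> b \notin C ->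
  rank_dag (lex_rank (layers C a b)) b = a |: C.
Proof.
move=> ab aC bC; have ba : (b == a) = false by rewrite eq_sym (negbTE ab).
apply/setP => y; rewrite ffunE inE lex_rank_lt /layers (negbTE bC) eqxx ba !inE.
case: (boolP (y \in C)) => yC; first by rewrite orbT.
case: (boolP (y == a)) => [/eqP ->|ya] //=.
by case: (boolP (y == b)) => [/eqP ->|yb] //=; rewrite ltnn.
Qed.

Lemma layers_dag_swap (C : {set N}) (a b x : N) : x != a -> x != b ->
  rank_dag (lex_rank (layers C a b)) x = rank_dag (lex_rank (layers C b a)) x.
Proof.
move=> xa xb; apply/setP => y.
rewrite !ffunE !inE !lex_rank_lt /layers (negbTE xa) (negbTE xb).
case: (boolP (x \in C)) => xC; case: (boolP (y \in C)) => yC //=.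
all: by case: (y == a); case: (y == b).
Qed.

Definition swap_identity (o : Ups -> R) : Prop := forall (a b : N) (C : {set N}),
  a != b -> a \notin C -> b \notin C ->
  ev o b (a |: C) - ev o b C = ev o a (b |: C) - ev o a C.

Lemma swap_identity_of_rank_const (o : Ups -> R) K :
  (forall r, injective r -> dot o (eta (rank_dag r)) = K) -> swap_identity o.
Proof.
move=> oK a b C ab aC bC.
set H1 := rank_dag (lex_rank (layers C a b)).
set H2 := rank_dag (lex_rank (layers C b a)).
have H12 : \sum_x ev o x (H1 x) = \sum_x ev o x (H2 x).
  by rewrite -!dot_eta !oK //; apply: lex_rank_inj.
have ba : b != a by rewrite eq_sym.
have split_ab (H : dgraph) : \sum_x ev o x (H x) =
    ev o a (H a) + (ev o b (H b) + \sum_(x | (x != a) && (x != b)) ev o x (H x)).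
  by rewrite (bigD1 a) // (bigD1 b) //=.
move: H12; rewrite !split_ab.
have -> : \sum_(x | (x != a) && (x != b)) ev o x (H1 x) =
          \sum_(x | (x != a) && (x != b)) ev o x (H2 x).
  by apply: eq_bigr => x /andP [xa xb]; rewrite /H1 /H2 layers_dag_swap.
rewrite /H1 /H2 layers_dag_fst // layers_dag_snd // layers_dag_fst // layers_dag_snd //.
by move=> h; lra.
Qed.

Lemma SE_swap_identity (o : Ups -> R) : SE o -> swap_identity o.
Proof.
move=> SEo; pose r0 := lex_rank (fun _ => 0%N).
apply: (swap_identity_of_rank_const (K := dot o (eta (rank_dag r0)))) => r r_inj.
by apply: SEo; rewrite ?rank_dag_is_dag //; apply: rank_dag_markov => //; apply: lex_rank_inj.
Qed.

Lemma eq_swap_identity (o1 o2 : Ups -> R) :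
  o1 =1 o2 -> swap_identity o1 -> swap_identity o2.
Proof. by move=> o12 swap1 a b C ab aC bC; rewrite -!(eq_ev _ _ o12) swap1. Qed.

Lemma swap_identityM (o : Ups -> R) c :
  swap_identity o -> swap_identity (fun i => c * o i).
Proof. by move=> swap_o a b C ab aC bC; rewrite !evM -!mulrBr swap_o. Qed.

Lemma delta_not_swap_identity (i : Ups) : ~ swap_identity (fun j => ((j == i) : nat)%:R : R).
Proof.
move=> swap_i; have /andP [aB nB] := valP i.
have [w wB] := set0Pn _ nB.
have wa : w != (val i).1 by apply: contraNneq aB => <-.
have wBw : w \notin (val i).2 :\ w by rewrite !inE eqxx.
have aBw : (val i).1 \notin (val i).2 :\ w by rewrite !inE negb_and aB orbT.
have := swap_i w (val i).1 ((val i).2 :\ w) wa wBw aBw.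
rewrite setD1K // !ev_delta -surjective_pairing eqxx.
have -> : (val i == ((val i).1, (val i).2 :\ w)) = false.
  apply/negbTE; rewrite [X in X == _]surjective_pairing xpair_eqE eqxx /=.
  by apply/eqP => Bw; move: wBw; rewrite -Bw wB.
have wX X : (val i == (w, X)) = false.
  by apply/negbTE; rewrite [X in X == _]surjective_pairing xpair_eqE eq_sym (negbTE wa).
by rewrite !wX /= subr0 subrr => /eqP; rewrite oner_eq0.
Qed.

Definition anc_count (G : dgraph) (x : N) : nat := #|[set z | connect (edge G) z x]|.

Lemma dag_sub_rank_dag (G : dgraph) :
  is_dag G -> forall x, G x \subset rank_dag (lex_rank (anc_count G)) x.
Proof.
move=> dagG x; apply/subsetP => y yx; rewrite ffunE inE lex_rank_lt; apply/orP; left.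
apply: proper_card; apply/properP; split.
  by apply/subsetP => z; rewrite !inE => zy; apply: connect_trans zy _; exact: connect1.
exists x; first by rewrite inE connect0.
by rewrite inE; move: dagG => /forallP /(_ y) /forallP /(_ x) /implyP; exact.
Qed.

End RankDags.

Section Moebius.
Variables (R : realFieldType) (N : finType).
Local Notation Ups := (Ups N).
Local Notation Sset := (Sset N).

Lemma signr_subn m k : (k <= m)%N -> (-1) ^+ (m - k) = (-1) ^+ m * (-1) ^+ k :> R.
Proof. by move=> km; rewrite -{2}(subnK km) exprD -mulrA -expr2 sqrr_sign mulr1. Qed.

Definition toggle (x : N) (K : {set N}) : {set N} := if x \in K then K :\ x else x |: K.

Lemma toggleK x : involutive (toggle x).
Proof.
move=> K; rewrite /toggle; case: (boolP (x \in K)) => xK; last by rewrite setU11 setU1K.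
by rewrite !inE eqxx /= setD1K.
Qed.

Lemma toggle_sign x K : (-1) ^+ #|toggle x K| = - (-1) ^+ #|K| :> R.
Proof.
rewrite /toggle; case: (boolP (x \in K)) => xK; last by rewrite cardsU1 xK add1n exprS mulN1r.
by rewrite [in RHS](cardsD1 x) xK add1n exprS mulN1r opprK.
Qed.

Lemma setD1_subset (K B : {set N}) x : x \in B -> (K :\ x \subset B) = (K \subset B).
Proof. by move=> xB; rewrite subDset (setUidPr _ : [set x] :|: B = B) // sub1set. Qed.

Lemma subset_setU1 (A K : {set N}) x : x \notin A -> (A \subset x |: K) = (A \subset K).
Proof.
move=> xA; apply/idP/idP => [AxK|AK]; last exact: subset_trans AK (subsetU1 _ _).
apply/subsetP => y yA; have := subsetP AxK y yA; rewrite !inE.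
by case/orP => [/eqP yx|//]; move: yA; rewrite yx (negbTE xA).
Qed.

(* Toggling an element of B :\: A is a sign-reversing involution. *)
Lemma sum_sign_interval (A B : {set N}) : A \subset B ->
  \sum_(K : {set N} | (K \subset B) && (A \subset K)) (-1) ^+ #|K| =
  if A == B then (-1) ^+ #|A| else 0 :> R.
Proof.
move=> AB; have [<-|nAB] := eqVneq A B.
  by rewrite (big_pred1 A) // => K; rewrite /= eqEsubset.
have [x /setDP [xB xA]] : exists x, x \in B :\: A.
  by apply/set0Pn; apply: contra nAB; rewrite setD_eq0 => BA; rewrite eqEsubset AB.
set S := (X in X = _); suff : S = - S by move=> h; lra.
rewrite {1}/S (reindex_inj (can_inj (toggleK x))) /= -sumrN.
apply: eq_big => K; last by move=> _; rewrite toggle_sign.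
rewrite /toggle; case: (boolP (x \in K)) => xK.
  by rewrite setD1_subset // subsetD1 xA andbT.
by rewrite subUset sub1set xB subset_setU1.
Qed.

Lemma pick_Sset (T : Sset) : exists2 b, [pick b in val T] = Some b & b \in val T.
Proof.
case: pickP => [b bT|Tempty]; first by exists b.
by have := card_Sset T; rewrite (eq_card0 Tempty).
Qed.

Lemma tau_pickE (o : Ups -> R) (T : Sset) b : [pick b in val T] = Some b ->
  tau o T = \sum_(K : {set N} | (K \subset val T :\ b) && (K != set0))
              (-1) ^+ (#|val T :\ b| - #|K|) * ev o b K.
Proof. by rewrite /tau => ->. Qed.

Lemma eq_tau (o1 o2 : Ups -> R) T : o1 =1 o2 -> tau o1 T = tau o2 T.
Proof.
move=> o12; rewrite /tau; case: pickP => // b _.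
by apply: eq_bigr => K _; rewrite (eq_ev _ _ o12).
Qed.

Lemma tauB (o1 o2 : Ups -> R) T : tau (fun i => o1 i - o2 i) T = tau o1 T - tau o2 T.
Proof.
rewrite /tau; case: pickP => [b _|]; last by rewrite subrr.
by rewrite -sumrB; apply: eq_bigr => K _; rewrite evB mulrBr.
Qed.

Lemma tau0 T : tau (fun _ : Ups => 0 : R) T = 0.
Proof. by rewrite /tau; case: pickP => // b _; rewrite big1 // => K _; rewrite ev0 mulr0. Qed.

Lemma sum_sign_pullback_at (t : Sset -> R) (T : Sset) b : b \in val T ->
  \sum_(K : {set N} | K \subset val T :\ b) (-1) ^+ #|K| * pullback_at t b K =
  (-1) ^+ #|val T :\ b| * t T.
Proof.
move=> bT; rewrite /pullback_at; under eq_bigr do rewrite mulr_sumr.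
rewrite (exchange_big_dep (fun S : Sset => b \in val S)) /=; last by move=> K S _ /andP [].
rewrite (bigD1 T) //= [X in _ + X]big1 ?addr0 => [|S /andP [bS nST]].
  under eq_bigl do rewrite bT /=.
  by rewrite -mulr_suml sum_sign_interval // eqxx mulrC.
under eq_bigl do rewrite bS /=.
rewrite -mulr_suml.
case: (boolP (val S :\ b \subset val T :\ b)) => STb; last first.
  rewrite big_pred0 ?mul0r // => K; apply/negP => /andP [KTb SbK].
  by move: STb; rewrite (subset_trans SbK KTb).
rewrite sum_sign_interval //; case: eqP => [STbE|_]; last by rewrite mul0r.
case/eqP: nST; apply: val_inj.
by transitivity (b |: (val S :\ b)); [rewrite setD1K | rewrite STbE setD1K].
Qed.

Lemma tau_pullback (t : Sset -> R) T : tau (pullback t) T = t T.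
Proof.
have [b pickTb bT] := pick_Sset T; rewrite (tau_pickE _ pickTb).
have sign2 : (-1) ^+ #|val T :\ b| * (-1) ^+ #|val T :\ b| = 1 :> R.
  by rewrite -expr2 sqrr_sign.
transitivity ((-1) ^+ #|val T :\ b| * ((-1) ^+ #|val T :\ b| * t T));
  last by rewrite mulrA sign2 mul1r.
rewrite -sum_sign_pullback_at // mulr_sumr.
rewrite [RHS](bigID (fun K => K != set0)) /= [X in _ = _ + X]big1 ?addr0; last first.
  by move=> K /andP [_ /negPn /eqP ->]; rewrite pullback_at_set0 !mulr0.
apply: eq_bigr => K /andP [KTb _].
have bK : b \notin K.
  by apply: contraT => /negPn bK; have := subsetP KTb _ bK; rewrite !inE eqxx.
by rewrite ev_pullback // signr_subn ?subset_leq_card // mulrA.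
Qed.

Lemma pullback_inj (t : Sset -> R) : (forall i, pullback t i = 0) -> forall T, t T = 0.
Proof. by move=> t0 T; rewrite -tau_pullback (eq_tau _ t0) tau0. Qed.

Lemma swap_identity_pullback (t : Sset -> R) : swap_identity (pullback t).
Proof.
move=> a b C ab aC bC; have ba : b != a by rewrite eq_sym.
have baC : b \notin a |: C by rewrite !inE negb_or ba.
have abC : a \notin b |: C by rewrite !inE negb_or ab.
rewrite !ev_pullback // /pullback_at.
have step (x y : N) : x != y -> x \notin C -> y \notin C ->
   \sum_(S : Sset | (y \in val S) && (val S :\ y \subset x |: C)) t S -
   \sum_(S : Sset | (y \in val S) && (val S :\ y \subset C)) t S =
   \sum_(S : Sset | [&& x \in val S, y \in val S & val S \subset x |: (y |: C)]) t S.
  move=> xy xC yC; rewrite (bigID (fun S : Sset => x \in val S)) /=.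
  have -> : \sum_(S : Sset | (y \in val S) && (val S :\ y \subset x |: C) && (x \notin val S)) t S =
            \sum_(S : Sset | (y \in val S) && (val S :\ y \subset C)) t S.
    apply: eq_bigl => S; rewrite !subDset.
    case: (boolP (x \in val S)) => xS /=; last by rewrite andbT setUCA subset_setU1.
    rewrite andbF; apply/esym/negP => /andP [_ SyC].
    by have := subsetP SyC x xS; rewrite !inE (negbTE xy) (negbTE xC).
  rewrite addrK; apply: eq_bigl => S; rewrite subDset setUCA.
  by case: (x \in val S); rewrite /= ?andbT ?andbF.
rewrite step // step //.
by apply: eq_bigl => S; rewrite setUCA; case: (a \in val S); case: (b \in val S).
Qed.

Lemma swap_identityB (o1 o2 : Ups -> R) :
  swap_identity o1 -> swap_identity o2 -> swap_identity (fun i => o1 i - o2 i).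
Proof.
move=> h1 h2 a b C ab aC bC; rewrite !evB.
by have := h1 a b C ab aC bC; have := h2 a b C ab aC bC; lra.
Qed.

(* Induction on |B|: the term K = T :\ b of tau d T = 0 expresses d(b|T :\ b)
   through smaller parent sets, and the swap identity moves any a to the
   position b picked by tau. *)
Lemma swap_identity_tau0 (d : Ups -> R) :
  swap_identity d -> (forall T, tau d T = 0) -> forall a B, ev d a B = 0.
Proof.
move=> swap_d tau_d0 a B; move: {2}#|B| (leqnn #|B|) => m.
elim: m a B => [|m IH] a B hB.
  by move: hB; rewrite leqn0 cards_eq0 => /eqP ->; rewrite ev_set0.
have [aB|aB] := boolP (a \in B); first exact: ev_mem.
have [->|nB] := eqVneq B set0; first by rewrite ev_set0.
have aB2 : (1 < #|a |: B|)%N by rewrite cardsU1 aB add1n ltnS card_gt0.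
pose T : Sset := Sub (a |: B) aB2.
have [b pickTb bT] := pick_Sset T.
have cardTb : #|val T :\ b| = #|B|.
  by move: (cardsD1 b (val T)); rewrite bT /= cardsU1 aB !add1n => -[].
have dTb : ev d b (val T :\ b) = 0.
  rewrite -(tau_d0 T) (tau_pickE _ pickTb) (bigD1 (val T :\ b)) /=; last first.
    by rewrite subxx -card_gt0 cardTb card_gt0.
  rewrite subnn expr0 mul1r big1 ?addr0 // => K /andP [/andP [KTb _] nK].
  rewrite (IH b K) ?mulr0 //.
  have : (#|K| < #|val T :\ b|)%N by apply: proper_card; rewrite properEneq nK KTb.
  by rewrite cardTb => h; rewrite -ltnS (leq_trans h hB).
have [ba|nba] := eqVneq b a; first by move: dTb; rewrite ba /= setU1K.
have bB : b \in B by move: bT; rewrite !inE (negbTE nba).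
have hC : (#|B :\ b| <= m)%N by move: hB; rewrite (cardsD1 b B) bB.
have aC : a \notin B :\ b by rewrite !inE negb_and aB orbT.
have bC : b \notin B :\ b by rewrite !inE eqxx.
have TbE : (a |: B) :\ b = a |: (B :\ b).
  by apply/setP => y; rewrite !inE; case: (eqVneq y b) => [->|] //=; rewrite (negbTE nba).
have ab : a != b by rewrite eq_sym.
have := swap_d a b (B :\ b) ab aC bC.
by rewrite -TbE dTb (IH b _ hC) (IH a _ hC) setD1K // => h; lra.
Qed.

Lemma pullback_tau (o : Ups -> R) : swap_identity o -> o =1 pullback (tau o).
Proof.
move=> swap_o i; apply/eqP; rewrite -subr_eq0; apply/eqP.
pose d i := o i - pullback (tau o) i.
have swap_d : swap_identity d by apply: swap_identityB => //; apply: swap_identity_pullback.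
have tau_d0 T : tau d T = 0 by rewrite tauB tau_pullback subrr.
by rewrite -[LHS]/(d i) -ev_val swap_identity_tau0.
Qed.

Lemma dot_tau (o : Ups -> R) e : swap_identity o -> dot o e = dot (tau o) (cvec e).
Proof. by move=> swap_o; rewrite dot_cvec; apply: eq_bigr => i _; rewrite -pullback_tau. Qed.

End Moebius.

Section Polytopes.
Variables (R : realFieldType) (N : finType).
Local Notation Ups := (Ups N).
Local Notation Sset := (Sset N).
Local Notation dgraph := (dgraph N).
Local Notation eta := (@Defs.eta R N).
Local Notation PN := (PN R N).
Local Notation CN := (CN R N).

Lemma eta_PN (G : dgraph) : is_dag G -> PN (eta G).
Proof. exact: (conv_fam_vertex (fun G => eta G)). Qed.

Lemma cvec_eta_CN (G : dgraph) : is_dag G -> CN (cvec (eta G)).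
Proof. exact: (conv_fam_vertex (fun G => cvec (eta G))). Qed.

Lemma cvec_PN (x : Ups -> R) : PN x -> CN (cvec x).
Proof.
apply: conv_fam_map => lam y yE S.
by rewrite cvecE (dot_conv_comb _ yE); apply: eq_bigr => G _; rewrite cvecE.
Qed.

Lemma CN_cvec (c : Sset -> R) : CN c -> exists2 x, PN x & c =1 cvec x.
Proof.
move=> [lam [lam_ge0 lamP lam1 cE]]; pose x i := \sum_G lam G * eta G i.
have xE i : x i = \sum_G lam G * eta G i by [].
exists x; first by exists lam.
by move=> S; rewrite cE cvecE (dot_conv_comb _ xE); apply: eq_bigr => G _; rewrite cvecE.
Qed.

Lemma dot_cvec_rank_dag (t : Sset -> R) r :
  injective r -> dot t (cvec (eta (rank_dag r))) = dot t (one_imset R N).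
Proof. by move=> r_inj; apply: eq_bigr => S _; rewrite cvec_rank_dag. Qed.

Lemma one_imset_CN : CN (one_imset R N).
Proof.
have r_inj := @lex_rank_inj N (fun _ => 0%N).
have [lam [lam_ge0 lamP lam1 cE]] := cvec_eta_CN (rank_dag_is_dag (lex_rank (fun _ => 0%N))).
by exists lam; split => // S; rewrite -[LHS](cvec_rank_dag R r_inj S).
Qed.

Definition set_parents (G : dgraph) (a : N) (B : {set N}) : dgraph :=
  [ffun x => if x == a then B else G x].

Lemma dot_set_parents (o : Ups -> R) (G : dgraph) (a : N) (B : {set N}) :
  dot o (eta (set_parents G a B)) = dot o (eta G) - ev o a (G a) + ev o a B.
Proof.
rewrite !dot_eta (bigD1 a) //= [in RHS](bigD1 a) //= ffunE eqxx.
rewrite (eq_bigr (fun x => ev o x (G x))) => [|x /negbTE xa]; last by rewrite ffunE xa.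
lra.
Qed.

Definition empty_dag : dgraph := [ffun _ => set0].

Lemma empty_dag_is_dag : is_dag empty_dag.
Proof. by apply: (dag_of_ranking (r := fun _ => 0%N)) => x y; rewrite ffunE inE. Qed.

Lemma dot_empty_dag (o : Ups -> R) : dot o (eta empty_dag) = 0.
Proof. by rewrite dot_eta big1 // => x _; rewrite ffunE ev_set0. Qed.

Lemma single_parents_dag (a : N) (B : {set N}) : a \notin B -> is_dag (set_parents empty_dag a B).
Proof.
move=> aB; apply: (dag_of_ranking (r := fun x => (x == a) : nat)) => x y.
rewrite !ffunE; case: (eqVneq y a) => [_|_]; last by rewrite inE.
by case: (eqVneq x a) => [->|//]; rewrite (negbTE aB).
Qed.

Lemma dot_single_parents (o : Ups -> R) (a : N) (B : {set N}) :
  dot o (eta (set_parents empty_dag a B)) = ev o a B.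
Proof. by rewrite dot_set_parents dot_empty_dag ffunE ev_set0 subrr add0r. Qed.

Lemma dag_annihilator (o : Ups -> R) u :
  (forall G, is_dag G -> dot o (eta G) = u) -> u = 0 /\ forall i, o i = 0.
Proof.
move=> Go; have u0 : u = 0 by rewrite -(Go _ empty_dag_is_dag) dot_empty_dag.
split => // i; have /andP [ni _] := valP i.
by rewrite -ev_val -dot_single_parents Go ?single_parents_dag.
Qed.

Lemma dim_PN : dim_ge PN #|{: Ups}|.
Proof.
apply: (dim_ge_of_annihilators (P := fun G : dgraph => is_dag G) (Y := fun G => eta G)
         (z := 0)) => //.
- exact: eta_PN.
- by move=> o u /dag_annihilator [u0 o0]; rewrite hyperplane_row0 ?sub0mx.
- by rewrite mxrank0 addn0 card_option.
Qed.

Lemma dim_CN : dim_ge CN #|{: Sset}|.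
Proof.
apply: (dim_ge_of_annihilators (P := fun G : dgraph => is_dag G)
         (Y := fun G => cvec (eta G)) (z := 0)) => //.
- exact: cvec_eta_CN.
- move=> t u tG; have [u0 /pullback_inj t0] : u = 0 /\ forall i, pullback t i = 0.
    by apply: dag_annihilator => G dagG; rewrite -dot_cvec tG.
  by rewrite hyperplane_row0 ?sub0mx.
- by rewrite mxrank0 addn0 card_option.
Qed.

Lemma card_Ups_gt0 : (1 < #|N|)%N -> (0 < #|{: Ups}|)%N.
Proof.
move/card_gt1P => [a [b [_ _ ab]]]; apply/card_gt0P.
have aB : (a \notin [set b]) && ([set b] != set0).
  by rewrite inE ab; apply/set0Pn; exists b; rewrite inE.
by exists (Sub (a, [set b]) aB).
Qed.

Lemma card_Sset_gt0 : (1 < #|N|)%N -> (0 < #|{: Sset}|)%N.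
Proof.
move/card_gt1P => [a [b [_ _ ab]]]; apply/card_gt0P.
have ab2 : (1 < #|[set a; b]|)%N by rewrite cards2 ab.
by exists (Sub [set a; b] ab2).
Qed.

(* A complete DAG whose node a has parent set B lies in the face; removing
   the parents of a leaves a DAG, which gives the reverse inequality. *)
Lemma dags_le0_complete_eq0 (o : Ups -> R) :
  (forall G, is_dag G -> dot o (eta G) <= 0) ->
  (forall r, injective r -> dot o (eta (rank_dag r)) = 0) -> forall i, o i = 0.
Proof.
move=> o_le0 o_complete i; have /andP [aB _] := valP i.
set a := (val i).1 in aB *; set B := (val i).2 in aB *.
rewrite -ev_val -/a -/B; apply/eqP; rewrite eq_le; apply/andP; split.
  by rewrite -dot_single_parents o_le0 ?single_parents_dag.
pose H := rank_dag (lex_rank (layers B a a)).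
have HaB : H a = B by rewrite /H layers_dag_fst.
have dagH' : is_dag (set_parents H a set0).
  apply: (dag_sub (rank_dag_is_dag (lex_rank (layers B a a)))) => x.
  by rewrite ffunE; case: (x == a); rewrite ?sub0set.
have := o_le0 _ dagH'.
rewrite dot_set_parents HaB o_complete; last exact: lex_rank_inj.
by rewrite (ev_set0 o a) addr0 sub0r oppr_le0.
Qed.

End Polytopes.

Section SEFacets.
Variables (R : realFieldType) (N : finType).
Local Notation Ups := (Ups N).
Local Notation dgraph := (dgraph N).
Local Notation eta := (@Defs.eta R N).
Local Notation PN := (PN R N).
Local Notation CN := (CN R N).

Hypothesis N2 : (1 < #|N|)%N.
Variables (o : Ups -> R) (u : R).
Hypothesis swap_o : swap_identity o.
Hypothesis valid_o : valid PN o u.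

Local Notation face := (face_of PN o u).
Local Notation cface := (face_of CN (tau o) u).
Local Notation in_face G := (is_dag G && (dot o (eta G) == u)).

Lemma dot_eta_le (G : dgraph) : is_dag G -> dot o (eta G) <= u.
Proof. by move=> dagG; apply/valid_o/eta_PN. Qed.

Lemma valid_tau : valid CN (tau o) u.
Proof.
move=> c /CN_cvec [x PNx cx].
have -> : dot (tau o) c = dot (tau o) (cvec x) by apply: eq_bigr => S _; rewrite cx.
by rewrite -dot_tau //; apply: valid_o.
Qed.

Lemma face_eq_of_dags o' u' :
  (forall G, in_face G -> dot o' (eta G) = u') -> forall x, face x -> dot o' x = u'.
Proof.
move=> Go' x [PNx xo]; apply: (conv_face_eq (f := fun G => eta G) _ _ PNx xo) => [G|G dagG oG].
  exact: dot_eta_le.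
by apply: Go'; rewrite dagG oG eqxx.
Qed.

Lemma cface_cvec c : cface c -> exists2 x, face x & c =1 cvec x.
Proof.
move=> [/CN_cvec [x PNx cx] tc]; exists x => //; split => //.
by rewrite (dot_tau _ swap_o) -tc; apply: eq_bigr => S _; rewrite cx.
Qed.

Lemma tau_neq0 : (exists i, o i != 0) -> exists S, tau o S != 0.
Proof.
case=> i o_i; case: (boolP [exists S, tau o S != 0]) => [/existsP //|/existsPn tau0].
move: o_i; rewrite (pullback_tau swap_o) /pullback /pullback_at big1 ?eqxx // => S _.
exact/eqP/negPn/tau0.
Qed.

Section FacetOfPN.
Hypothesis facet_o : is_facet PN face.

Lemma facet_annihilator_dags o' u' : (forall G, in_face G -> dot o' (eta G) = u') ->
  exists a, (forall i, o' i = a * o i) /\ u' = a * u.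
Proof.
move=> Go'; apply: (facet_annihilator (card_Ups_gt0 N2) (dim_PN R N) facet_o).
exact: face_eq_of_dags.
Qed.

(* Otherwise the indicator of (a|B) vanishes on the facet, so it is a multiple
   of o and inherits the swap identity, which it violates. *)
Lemma face_realizes_parents (i : Ups) : exists2 G, in_face G & G (val i).1 = (val i).2.
Proof.
case: (boolP [exists G, in_face G && (G (val i).1 == (val i).2)]).
  by move=> /existsP [G /andP [GF /eqP Gi]]; exists G.
move=> /existsPn noG; exfalso.
have [a [deltaE _]] : exists a,
    (forall j, ((j == i) : nat)%:R = a * o j) /\ (0 : R) = a * u.
  apply: facet_annihilator_dags => G GF; rewrite dot_delta /Defs.eta.
  by move: (noG G); rewrite GF /= => /negbTE ->.
apply: (@delta_not_swap_identity R N i); apply: (eq_swap_identity (o1 := fun j => a * o j)).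
  by move=> j; rewrite deltaE.
exact: swap_identityM.
Qed.

Lemma face_monotone v (B : {set N}) w : v \notin B -> w \notin B -> w != v ->
  ev o v B <= ev o v (w |: B).
Proof.
move=> vB wB wv.
have vwB : (v \notin w |: B) && (w |: B != set0).
  by rewrite !inE negb_or eq_sym wv vB /=; apply/set0Pn; exists w; rewrite !inE eqxx.
have [G /andP [dagG /eqP oG] /= Gv] := face_realizes_parents (Sub (v, w |: B) vwB).
have dagG' : is_dag (set_parents G v B).
  apply: (dag_sub dagG) => x; rewrite ffunE; case: eqP => [->|_]; last exact: subxx.
  by rewrite Gv subsetUr.
by have := dot_eta_le dagG'; rewrite dot_set_parents oG Gv => h; lra.
Qed.

(* Saturating the parent sets of a DAG of the face keeps it in the face. *)
Lemma face_complete_dag : exists2 r, injective r & dot o (eta (rank_dag r)) = u.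
Proof.
have /card_gt0P [i _] := card_Ups_gt0 N2.
have [G /andP [dagG /eqP oG] _] := face_realizes_parents i.
exists (lex_rank (anc_count G)); first exact: lex_rank_inj.
apply/eqP; rewrite eq_le dot_eta_le ?rank_dag_is_dag //= -{1}oG !dot_eta.
apply: ler_sum => x _; apply: (ev_monotone face_monotone).
  exact: dag_irrefl (rank_dag_is_dag _).
exact: dag_sub_rank_dag.
Qed.

Lemma facet_one_imset : cface (one_imset R N).
Proof.
have [r r_inj oH] := face_complete_dag.
split; first exact: one_imset_CN.
by rewrite -(dot_cvec_rank_dag _ r_inj) -dot_tau.
Qed.

Lemma facet_tau_facet : is_facet CN cface.
Proof.
have [S tS] := tau_neq0 (facet_normal_neq0 (card_Ups_gt0 N2) (dim_PN R N) facet_o).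
apply: (is_facet_face (P := fun G : dgraph => in_face G) (Y := fun G => cvec (eta G))
          (card_Sset_gt0 N2) (dim_CN R N) valid_tau); first by exists S.
  move=> G /andP [dagG /eqP oG]; split; first exact: cvec_eta_CN.
  by rewrite -dot_tau.
move=> t' u' Gt'.
have [a [t'o u'E]] : exists a, (forall i, pullback t' i = a * o i) /\ u' = a * u.
  by apply: facet_annihilator_dags => G GF; rewrite -dot_cvec Gt'.
exists a; split => // T; apply/eqP; rewrite -subr_eq0; apply/eqP; move: T.
apply: (pullback_inj (t := fun S => t' S - a * tau o S)) => i.
by rewrite pullbackB pullbackM t'o -(pullback_tau swap_o) subrr.
Qed.

End FacetOfPN.

Lemma tau_facet_facet : is_facet CN cface -> cface (one_imset R N) -> is_facet PN face.
Proof.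
move=> facet_t [_ t1].
have complete_in_face r : injective r -> in_face (rank_dag r).
  by move=> r_inj; rewrite rank_dag_is_dag /= (dot_tau _ swap_o) dot_cvec_rank_dag // t1.
apply: (is_facet_face (P := fun G : dgraph => in_face G) (Y := fun G => eta G)
          (card_Ups_gt0 N2) (dim_PN R N) valid_o).
- have [S] := facet_normal_neq0 (card_Sset_gt0 N2) (dim_CN R N) facet_t.
  case: (boolP [exists i, o i != 0]) => [/existsP //|/existsPn o0].
  by rewrite (eq_tau _ (fun i => eqP (negPn (o0 i)) : o i = 0)) tau0 eqxx.
- by move=> G /andP [dagG /eqP oG]; split; first exact: eta_PN.
move=> o' u' Go'.
have swap_o' : swap_identity o'.
  by apply: (swap_identity_of_rank_const (K := u')) => r r_inj; apply/Go'/complete_in_face.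
have [a [t'E u'E]] : exists a, (forall S, tau o' S = a * tau o S) /\ u' = a * u.
  apply: (facet_annihilator (card_Sset_gt0 N2) (dim_CN R N) facet_t).
  move=> c /cface_cvec [x xF cx].
  have -> : dot (tau o') c = dot (tau o') (cvec x) by apply: eq_bigr => S _; rewrite cx.
  by rewrite -dot_tau //; apply: face_eq_of_dags xF.
exists a; split => // i.
rewrite (pullback_tau swap_o') (pullback_tau swap_o) -pullbackM.
by apply: eq_bigr => S _; exact: t'E.
Qed.

Lemma facet_iff_tau_facet : is_facet PN face <-> is_facet CN cface /\ cface (one_imset R N).
Proof.
split=> [facet_o | [facet_t one_in]]; last exact: tau_facet_facet.
by split; [exact: facet_tau_facet | exact: facet_one_imset].
Qed.

End SEFacets.

Section FacetsOfCN.
Variables (R : realFieldType) (N : finType).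
Local Notation Sset := (Sset N).
Local Notation PN := (PN R N).
Local Notation CN := (CN R N).

Lemma facet_CN_SE_face (F : (Sset -> R) -> Prop) : is_facet CN F ->
  exists o u, [/\ SE o, valid PN o u & forall c, F c <-> face_of CN (tau o) u c].
Proof.
move=> [[t [u [valid_t FE]]] _]; exists (pullback t), u; split.
- move=> G H dagG dagH GH; rewrite -!dot_cvec; apply: eq_bigr => S _.
  by rewrite (cvec_eta_markov R dagG dagH GH).
- by move=> x PNx; rewrite -dot_cvec; apply/valid_t/cvec_PN.
- move=> c; rewrite FE /face_of.
  by have -> : dot (tau (pullback t)) c = dot t c by apply: eq_bigr => S _; rewrite tau_pullback.
Qed.

(* With 0 and 1 in the face, the pulled back inequality is <= 0 on all DAGs
   and tight on complete DAGs, which forces it to vanish. *)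
Lemma facet_CN_one_not_zero (F : (Sset -> R) -> Prop) : (1 < #|N|)%N ->
  is_facet CN F -> F (one_imset R N) -> ~ F (zero_imset R N).
Proof.
move=> N2 facetF F1 F0; have [[t [u [valid_t FE]]] _] := facetF.
have u0 : u = 0 by have [_ <-] := (FE _).1 F0; rewrite /dot big1 // => S _; rewrite mulr0.
have t1 : dot t (one_imset R N) = 0 by rewrite -u0; have [_ ->] := (FE _).1 F1.
have /pullback_inj t0 : forall i, pullback t i = 0.
  apply: dags_le0_complete_eq0 => [G dagG|r r_inj].
    by rewrite -dot_cvec -u0; apply/valid_t/cvec_eta_CN.
  by rewrite -dot_cvec dot_cvec_rank_dag.
have [_ _ nfull] := (is_facetP _ (card_Sset_gt0 N2) (dim_CN R N)).1 facetF.
apply/nfull/(dim_ge_subset _ (dim_CN R N)) => c CNc; apply/FE; split => //.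
by rewrite u0 /dot big1 // => S _; rewrite t0 mul0r.
Qed.

End FacetsOfCN.

Theorem corollary6 (R : realFieldType) (N : finType) (hN : (1 < #|N|)%N) :
  (forall (o : Ups N -> R) (u : R), SE o -> valid (PN R N) o u ->
     (is_facet (PN R N) (face_of (PN R N) o u) <->
      is_facet (CN R N) (face_of (CN R N) (tau o) u) /\
      face_of (CN R N) (tau o) u (one_imset R N))) /\
  (forall F : (Sset N -> R) -> Prop, is_facet (CN R N) F -> F (one_imset R N) ->
     exists (o : Ups N -> R) (u : R), [/\ SE o, valid (PN R N) o u &
        forall c, F c <-> face_of (CN R N) (tau o) u c]) /\
  (forall F : (Sset N -> R) -> Prop, is_facet (CN R N) F -> F (one_imset R N) ->
     ~ F (zero_imset R N)).
Proof.
split.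
  by move=> o u SEo valid_o; apply: facet_iff_tau_facet => //; exact: SE_swap_identity.
split; first by move=> F facetF _; apply: facet_CN_SE_face.
by move=> F; apply: facet_CN_one_not_zero.
Qed.
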